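(* Consider a system of $M$ conservation laws with state space $\mathcal D\subset\mathbb R^M$, interface-normal flux $\mathbf f:\mathcal D\to\mathbb R^M$, entropy variables $\mathbf v=(v^1,\dots,v^M):\mathcal D\to\mathbb R^M$ and entropy flux potential $\Psi:\mathcal D\to\mathbb R$, and let $\mathbf f^{\mathrm{EC}}=(f^{\mathrm{EC},1},\dots,f^{\mathrm{EC},M}):\mathcal D\times\mathcal D\to\mathbb R^M$ be an entropy conservative two-point flux, i.e. $(\mathbf v(\mathbf u_R)-\mathbf v(\mathbf u_L))^T\mathbf f^{\mathrm{EC}}(\mathbf u_L,\mathbf u_R)=\Psi(\mathbf u_R)-\Psi(\mathbf u_L)$ for all $\mathbf u_L,\mathbf u_R\in\mathcal D$. Let $N_L,N_R\ge1$, let $\mathbf M_L\in\mathbb R^{(N_L+1)\times(N_L+1)}$, $\mathbf M_R\in\mathbb R^{(N_R+1)\times(N_R+1)}$ be diagonal with positive diagonal entries, and let $\mathbf P_{L2R}\in\mathbb R^{(N_R+1)\times(N_L+1)}$, $\mathbf P_{R2L}\in\mathbb R^{(N_L+1)\times(N_R+1)}$ satisfy $\mathbf P_{R2L}^T\mathbf M_L=\mathbf M_R\mathbf P_{L2R}$, $\mathbf P_{L2R}\mathbf 1^L=\mathbf 1^R$ and $\mathbf P_{R2L}\mathbf 1^R=\mathbf 1^L$. Let $\mathbf U^L_0,\dots,\mathbf U^L_{N_L}\in\mathcal D$ and $\mathbf U^R_0,\dots,\mathbf U^R_{N_R}\in\mathcal D$ be arbitrary (the left and right interface states). For $q=1,\dots,M$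 define $\mathbf F^q\in\mathbb R^{(N_L+1)\times(N_R+1)}$ by $[\mathbf F^q]_{ij}=f^{\mathrm{EC},q}(\mathbf U^L_i,\mathbf U^R_j)$ and the numerical surface fluxes $$\mathbf F^{q,L}:=\mathbb E\big(\mathbf P_{R2L}(\mathbf F^q)^T\big)\in\mathbb R^{N_L+1},\qquad \mathbf F^{q,R}:=\mathbb E\big(\mathbf P_{L2R}\mathbf F^q\big)\in\mathbb R^{N_R+1},$$ i.e. $F^{q,L}_i=\sum_{j=0}^{N_R}[\mathbf P_{R2L}]_{ij}f^{\mathrm{EC},q}(\mathbf U^L_i,\mathbf U^R_j)$ and $F^{q,R}_j=\sum_{i=0}^{N_L}[\mathbf P_{L2R}]_{ji}f^{\mathrm{EC},q}(\mathbf U^L_i,\mathbf U^R_j)$. Let $V^{q,L}_i=v^q(\mathbf U^L_i)$, $\Psi^L_i=\Psi(\mathbf U^L_i)$, $V^{q,R}_j=v^q(\mathbf U^R_j)$, $\Psi^R_j=\Psi(\mathbf U^R_j)$. Then these fluxes are primary and entropy conservative at the interface: for every $q=1,\dots,M$, $$\Delta U^q:=(\mathbf 1^R)^T\mathbf M_R\mathbf F^{q,R}-(\mathbf 1^L)^T\mathbf M_L\mathbf F^{q,L}=0,$$ and $$\Delta S:=\sum_{q=1}^M(\mathbf V^{q,R})^T\mathbf M_R\mathbf F^{q,R}-(\mathbf 1^R)^T\mathbf M_R\boldsymbol\Psi^R-\sum_{q=1}^M(\mathbf V^{q,L})^T\mathbf M_L\mathbf F^{q,L}+(\mathbf 1^L)^T\mathbf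 M_L\boldsymbol\Psi^L=0.$$
   Context: Setting: a nodal discontinuous Galerkin spectral element method (collocated on Legendre–Gauss–Lobatto nodes, so derivative/mass matrices satisfy the summation-by-parts property) for a hyperbolic system $\mathbf u_t+\mathbf f(\mathbf u)_x+\mathbf g(\mathbf u)_y=0$ with a strongly convex entropy $S(\mathbf u)$, entropy variables $\mathbf v=\partial S/\partial\mathbf u$, entropy flux $F$ (with $\mathbf v^T\mathbf f'(\mathbf u)=F'(\mathbf u)$) and entropy flux potential $\Psi=\mathbf v\cdot\mathbf f-F$. Two neighboring elements $L$ (left) and $R$ (right) share one full interface edge (same edge length, no hanging nodes) but may have different polynomial degrees $N_L,N_R$; $\mathbf M_L,\mathbf M_R$ are their 1D quadrature weight matrices on the interface. When entropy conservative volume fluxes are used, the rate of change of the total integral of the $q$-th conserved variable and of the total entropy receive, from this interface, exactly the contributions $\Delta U^q$ and $\Delta S$ (up to a common positive geometric factor); ''primary and entropy conservative'' means these vanish. Notation: for a square matrix $\mathbf W$, $\mathbb E(\mathbf W)$ is the vector of its diagonal entries; $\mathbf 1^L\in\mathbb R^{N_L+1}$, $\mathbf 1^R\in\mathbb R^{N_R+1}$ are all-ones vectors; $\boldsymbol\Psi^L,\boldsymbol\Psi^R,\mathbf V^{q,L},\mathbf V^{q,R}$ are the vectors with the indicated entries. *)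

From mathcomp Require Import all_boot all_order all_algebra.
Set Implicit Arguments. Unset Strict Implicit. Unset Printing Implicit Defensive.
Import Order.TTheory GRing.Theory Num.Theory.
Local Open Scope ring_scope.

Definition diagE (R : ringType) (n : nat) (W : 'M[R]_n) : 'cV[R]_n :=
  \col_i W i i.

Definition ones (R : ringType) (n : nat) : 'cV[R]_n := const_mx 1.

Definition pos_diag (R : numDomainType) (n : nat) (W : 'M[R]_n) : Prop :=
  is_diag_mx W /\ forall i, 0 < W i i.

From mathcomp Require Import all_boot all_order all_algebra.
Import Order.TTheory GRing.Theory Num.Theory.
Local Open Scope ring_scope.

(* Both interface fluxes are weighted sums of the same two-point values
   [fEC(U^L_i, U^R_j)] with the same mortar weights
   [G_ji = (M_R P_L2R)_ji = (P_R2L^T M_L)_ji]; the consistency conditions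
   [P 1 = 1] make the row and column sums of [G] equal to the quadrature
   weights.  Hence [Delta U] is [sum G_ji F_ij - sum G_ji F_ij = 0], and
   [Delta S] is [sum_ji G_ji ((v_j^R - v_i^L) . fEC - (Psi_j^R - Psi_i^L))],
   which vanishes termwise because the two-point flux is entropy
   conservative. *)

Section DiagonalForms.

Variable R : comNzRingType.

Lemma mulmx_onesE m n (A : 'M[R]_(m, n)) i : (A *m ones R n) i 0 = \sum_j A i j.
Proof. by rewrite mxE; apply: eq_bigr => j _; rewrite mxE mulr1. Qed.

Lemma diag_formE n (x y : 'cV[R]_n) (d : 'rV[R]_n) :
  (x^T *m diag_mx d *m y) 0 0 = \sum_j x j 0 * d 0 j * y j 0.
Proof. by rewrite mxE; apply: eq_bigr => j _; rewrite mul_mx_diag !mxE. Qed.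

Lemma diag_form_diagE n m (x : 'cV[R]_n) (d : 'rV[R]_n)
    (A : 'M[R]_(n, m)) (B : 'M[R]_(m, n)) :
  (x^T *m diag_mx d *m diagE (A *m B)) 0 0
  = \sum_j \sum_k x j 0 * (diag_mx d *m A) j k * B k j.
Proof.
rewrite diag_formE; apply: eq_bigr => j _.
rewrite !mxE mulr_sumr; apply: eq_bigr => k _.
by rewrite mul_diag_mx !mxE !mulrA.
Qed.

End DiagonalForms.

Section MortarInterface.

Variables (R : comNzRingType) (nL nR : nat).
Variables (dL : 'rV[R]_nL) (dR : 'rV[R]_nR).
Variables (PL2R : 'M[R]_(nR, nL)) (PR2L : 'M[R]_(nL, nR)).
Hypothesis hP : PR2L^T *m diag_mx dL = diag_mx dR *m PL2R.
Hypothesis hPL2R : PL2R *m ones R nL = ones R nR.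
Hypothesis hPR2L : PR2L *m ones R nR = ones R nL.

Let G := diag_mx dR *m PL2R.

Lemma mortar_weight_tr : diag_mx dL *m PR2L = G^T.
Proof. by rewrite /G -hP trmx_mul trmxK tr_diag_mx. Qed.

Lemma mortar_weight_row_sum j : \sum_i G j i = dR 0 j.
Proof.
by rewrite -mulmx_onesE -mulmxA hPL2R mul_diag_mx !mxE mulr1.
Qed.

Lemma mortar_weight_col_sum i : \sum_j G j i = dL 0 i.
Proof.
transitivity (\sum_j G^T i j); first by apply: eq_bigr => j _; rewrite [RHS]mxE.
by rewrite -mulmx_onesE -mortar_weight_tr -mulmxA hPR2L mul_diag_mx !mxE mulr1.
Qed.

Lemma mortar_formL (y : 'cV[R]_nL) (F : 'M[R]_(nL, nR)) :
  (y^T *m diag_mx dL *m diagE (PR2L *m F^T)) 0 0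
  = \sum_j \sum_i y i 0 * G j i * F i j.
Proof.
rewrite diag_form_diagE mortar_weight_tr exchange_big /=.
by apply: eq_bigr => j _; apply: eq_bigr => i _; rewrite !mxE.
Qed.

Lemma mortar_onesR (p : 'cV[R]_nR) :
  ((ones R nR)^T *m diag_mx dR *m p) 0 0 = \sum_j \sum_i p j 0 * G j i.
Proof.
rewrite diag_formE; apply: eq_bigr => j _.
by rewrite -mulr_sumr mortar_weight_row_sum mxE mul1r mulrC.
Qed.

Lemma mortar_onesL (p : 'cV[R]_nL) :
  ((ones R nL)^T *m diag_mx dL *m p) 0 0 = \sum_j \sum_i p i 0 * G j i.
Proof.
rewrite diag_formE exchange_big /=; apply: eq_bigr => i _.
by rewrite -mulr_sumr mortar_weight_col_sum mxE mul1r mulrC.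
Qed.

Lemma mortar_primary_conservative (F : 'M[R]_(nL, nR)) :
  ((ones R nR)^T *m diag_mx dR *m diagE (PL2R *m F)) 0 0
  - ((ones R nL)^T *m diag_mx dL *m diagE (PR2L *m F^T)) 0 0 = 0.
Proof.
rewrite diag_form_diagE mortar_formL; apply/eqP; rewrite subr_eq0; apply/eqP.
by apply: eq_bigr => j _; apply: eq_bigr => i _; rewrite !mxE.
Qed.

Lemma mortar_entropy_conservative (m : nat) (F : 'I_m -> 'M[R]_(nL, nR))
    (VL : 'I_m -> 'cV[R]_nL) (VR : 'I_m -> 'cV[R]_nR)
    (psiL : 'cV[R]_nL) (psiR : 'cV[R]_nR) :
  (forall i j, \sum_q (VR q j 0 - VL q i 0) * F q i j = psiR j 0 - psiL i 0) ->
  \sum_q ((VR q)^T *m diag_mx dR *m diagE (PL2R *m F q)) 0 0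
  - ((ones R nR)^T *m diag_mx dR *m psiR) 0 0
  - \sum_q ((VL q)^T *m diag_mx dL *m diagE (PR2L *m (F q)^T)) 0 0
  + ((ones R nL)^T *m diag_mx dL *m psiL) 0 0 = 0.
Proof.
move=> hEC.
have flux_jump : \sum_q ((VR q)^T *m diag_mx dR *m diagE (PL2R *m F q)) 0 0
    - \sum_q ((VL q)^T *m diag_mx dL *m diagE (PR2L *m (F q)^T)) 0 0
    = \sum_j \sum_i (psiR j 0 - psiL i 0) * G j i.
  rewrite -sumrB; under eq_bigr do rewrite diag_form_diagE mortar_formL -sumrB.
  rewrite exchange_big; apply: eq_bigr => j _.
  under eq_bigr do rewrite -sumrB.
  rewrite exchange_big; apply: eq_bigr => i _.
  rewrite -hEC mulr_suml; apply: eq_bigr => q _.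
  by rewrite 2!mulrBl !(mulrAC _ (G j i)).
rewrite [_ - _ - _]addrAC flux_jump mortar_onesR mortar_onesL -sumrB -big_split.
apply: big1 => j _; rewrite -sumrB -big_split; apply: big1 => i _.
by rewrite /= mulrBl addrAC subrK subrr.
Qed.

End MortarInterface.

Theorem theorem1 (R : realFieldType) (M : nat)
  (D : {pred 'cV[R]_M})
  (f : 'cV[R]_M -> 'cV[R]_M)             (* interface-normal flux (unused) *)
  (v : 'cV[R]_M -> 'cV[R]_M)             (* entropy variables *)
  (Psi : 'cV[R]_M -> R)                  (* entropy flux potential *)
  (fEC : 'cV[R]_M -> 'cV[R]_M -> 'cV[R]_M)
  (hEC : forall uL uR, uL \in D -> uR \in D ->
     ((v uR - v uL)^T *m fEC uL uR) 0 0 = Psi uR - Psi uL)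
  (NL NR : nat) (hNL : (1 <= NL)%N) (hNR : (1 <= NR)%N)
  (ML : 'M[R]_NL.+1) (MR : 'M[R]_NR.+1)
  (hML : pos_diag ML) (hMR : pos_diag MR)
  (PL2R : 'M[R]_(NR.+1, NL.+1)) (PR2L : 'M[R]_(NL.+1, NR.+1))
  (hP : PR2L^T *m ML = MR *m PL2R)
  (hPL2R : PL2R *m ones R NL.+1 = ones R NR.+1)
  (hPR2L : PR2L *m ones R NR.+1 = ones R NL.+1)
  (UL : 'I_NL.+1 -> 'cV[R]_M) (UR : 'I_NR.+1 -> 'cV[R]_M)
  (hUL : forall i, UL i \in D) (hUR : forall j, UR j \in D) :
  let F q : 'M[R]_(NL.+1, NR.+1) := \matrix_(i, j) fEC (UL i) (UR j) q 0 in
  let FL q : 'cV[R]_NL.+1 := diagE (PR2L *m (F q)^T) in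
  let FR q : 'cV[R]_NR.+1 := diagE (PL2R *m F q) in
  let VL q : 'cV[R]_NL.+1 := \col_i v (UL i) q 0 in
  let VR q : 'cV[R]_NR.+1 := \col_j v (UR j) q 0 in
  let PsiL : 'cV[R]_NL.+1 := \col_i Psi (UL i) in
  let PsiR : 'cV[R]_NR.+1 := \col_j Psi (UR j) in
  (forall q : 'I_M,
     ((ones R NR.+1)^T *m MR *m FR q) 0 0
     - ((ones R NL.+1)^T *m ML *m FL q) 0 0 = 0)
  /\
  (\sum_(q < M) ((VR q)^T *m MR *m FR q) 0 0
   - ((ones R NR.+1)^T *m MR *m PsiR) 0 0
   - \sum_(q < M) ((VL q)^T *m ML *m FL q) 0 0
   + ((ones R NL.+1)^T *m ML *m PsiL) 0 0 = 0).
Proof.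
move=> F FL FR VL VR PsiL PsiR.
have [/diag_mxP[dL eML] _] := hML; have [/diag_mxP[dR eMR] _] := hMR.
subst ML MR; split=> [q|]; first exact: mortar_primary_conservative hP _.
apply: (@mortar_entropy_conservative _ _ _ _ _ _ _ hP hPL2R hPR2L _ F) => i j.
rewrite !mxE -(hEC _ _ (hUL i) (hUR j)) mxE.
by apply: eq_bigr => q _; rewrite !mxE.
Qed.
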